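(* Let $\ell \geq 2$ and let $\mathcal G \subset \binom{[2\ell]}{\ell}$ be a non-empty non-trivial family. For $r \ge 1$ let $t_r$ be the number of sets $T \in \binom{[2\ell]}{r}$ such that $T \cap G \neq \emptyset$ for all $G \in \mathcal G$. Then for every $2 \leq r < \ell$, $$t_r \leq \binom{2\ell}{r} - 2\binom{\ell}{r}.$$
   Context: A non-empty family is non-trivial if the intersection of all its members is empty. *)

From mathcomp Require Import all_boot.
Set Implicit Arguments. Unset Strict Implicit. Unset Printing Implicit Defensive.

Definition nontrivial_family (n : nat) (F : {set {set 'I_n}}) : Prop :=
  \bigcap_(G in F) G = set0.

Definition transversal_count (n : nat) (F : {set {set 'I_n}}) (r : nat) : nat :=
  #|[set T : {set 'I_n} | (#|T| == r) && [forall G in F, T :&: G != set0]]|.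

(* Fix a member G1 of the family. The r-sets disjoint from G1 are
   non-transversals, and there are C(l, r) of them. For the others, nontriviality
   gives, for each x in G1, a member G_x avoiding x; the C(l-1, r-1) r-subsets
   of the complement of G_x through x are non-transversals that meet G1.
   Counting pairs (x, T) with x in G1 and T such a set, each T being counted at
   most r times, yields at least l C(l-1, r-1) / r = C(l, r) further
   non-transversals. *)
From mathcomp Require Import all_boot.

Set Implicit Arguments.
Unset Strict Implicit.
Unset Printing Implicit Defensive.

Lemma sum_mem_card (I : finType) (A B : {set I}) :
  \sum_(x in A) (x \in B : nat) = #|A :&: B|.
Proof.
rewrite -sum1_card [RHS]big_mkcond /= big_mkcond /=.
by apply: eq_bigr => x _; rewrite !inE; case: (x \in A); case: (x \in B).
Qed.

Section Transversals.

Variable I : finType.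
Implicit Types (A B G T : {set I}) (F S : {set {set I}}).

Definition nontransversals F r :=
  [set T : {set I} | (#|T| == r) && [exists G in F, [disjoint T & G]]].

Lemma double_count_leq B S r c :
    (forall T, T \in S -> #|T| <= r) ->
    (forall x, x \in B -> c <= #|[set T in S | x \in T]|) ->
  #|B| * c <= #|S| * r.
Proof.
move=> leTr leSx; rewrite -!sum_nat_const.
apply: (@leq_trans (\sum_(x in B) #|[set T in S | x \in T]|)).
  exact: leq_sum.
have countE x : #|[set T in S | x \in T]| = \sum_(T in S) (x \in T : nat).
  by rewrite setIdE -sum_mem_card; apply: eq_bigr => T _; rewrite inE.
rewrite (eq_bigr _ (fun x _ => countE x)) exchange_big /=.
apply: leq_sum => T TS; rewrite sum_mem_card.
apply: leq_trans (leTr T TS); apply: subset_leq_card.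
by apply/subsetP => x; rewrite !inE => /andP[].
Qed.

Lemma card_draws_mem A x k : x \in A ->
  #|[set T : {set I} | [&& T \subset A, x \in T & #|T| == k.+1]]|
    = 'C(#|A|.-1, k).
Proof.
move=> xA; have cardA : #|A| = #|A :\ x|.+1 by rewrite (cardsD1 x A) xA.
have := cards_draws A k.+1.
rewrite -(cardsID [set T : {set I} | x \in T]) cardA /= binS.
have -> : [set T : {set I} | T \subset A & #|T| == k.+1]
            :\: [set T : {set I} | x \in T]
          = [set T : {set I} | T \subset A :\ x & #|T| == k.+1].
  by apply/setP => T; rewrite !inE subsetD1; case: (x \in T); case: (T \subset A).
rewrite cards_draws addnC => /addnI <-.
by apply: eq_card => T; rewrite !inE -!andbA; do !bool_congr.
Qed.

Lemma card_nontransversals_geq F m k :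
    F != set0 -> \bigcap_(G in F) G = set0 ->
    (forall G, G \in F -> #|G| = m /\ #|~: G| = m) ->
  2 * 'C(m, k.+1) <= #|nontransversals F k.+1|.
Proof.
move=> F0 capF0 cardF; have [G1 G1F] := set0Pn _ F0.
have [cardG1 cardCG1] := cardF G1 G1F.
set N := nontransversals F k.+1; set D := [set T : {set I} | [disjoint T & G1]].
rewrite mul2n -addnn -(cardsID D N) leq_add //.
  rewrite -cardCG1 -cards_draws; apply: subset_leq_card.
  apply/subsetP => T; rewrite !inE -disjoints_subset => /andP[TG1 ->].
  by rewrite TG1 andbT; apply/exists_inP; exists G1.
rewrite -(leq_pmul2r (ltn0Sn k)) mulnC -mul_bin_diag -{1}cardG1.
apply: double_count_leq => [T|x xG1].
  by rewrite !inE => /and3P[_ /eqP -> _].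
have [Gx GxF xGx] : exists2 Gx, Gx \in F & x \notin Gx.
  apply/exists_inP; rewrite -negb_forall_in; apply/forall_inP => xF.
  by have := in_set0 x; rewrite -capF0 => /negP; apply; apply/bigcapP.
have [_ cardCGx] := cardF Gx GxF.
rewrite -cardCGx -(card_draws_mem k (_ : x \in ~: Gx)) ?inE //.
apply: subset_leq_card.
apply/subsetP => T; rewrite !inE -disjoints_subset => /and3P[TGx xT ->] /=.
rewrite xT andbT; apply/andP; split.
  by apply/negP => /disjointFr/(_ xT); rewrite xG1.
by apply/exists_inP; exists Gx.
Qed.

End Transversals.

Lemma transversal_count_add_nontransversals n (F : {set {set 'I_n}}) r :
  transversal_count F r + #|nontransversals F r| = 'C(n, r).
Proof.
rewrite -[n in 'C(n, _)]card_ord -card_draws.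
rewrite -[RHS](cardsID [set T : {set 'I_n} | [forall G in F, T :&: G != set0]]).
congr (_ + _); apply: eq_card => T; rewrite !inE; first by rewrite andbC.
rewrite negb_forall_in [RHS]andbC; congr (_ && _).
by apply: eq_existsb => G; rewrite negbK setI_eq0.
Qed.

Theorem lemma4p4 (l : nat) (F : {set {set 'I_(2 * l)}}) :
  2 <= l ->
  (forall G, G \in F -> #|G| = l) ->
  F != set0 ->
  nontrivial_family F ->
  forall r, 2 <= r -> r < l ->
  transversal_count F r <= 'C(2 * l, r) - 2 * 'C(l, r).
Proof.
move=> _ cardF F0 ntF r r2 _.
have cardFC G : G \in F -> #|G| = l /\ #|~: G| = l.
  move=> GF; split; first exact: cardF.
  by apply/eqP; rewrite -(eqn_add2l l) -{1}(cardF G GF) cardsC card_ord mul2n addnn.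
have := card_nontransversals_geq r.-1 F0 ntF cardFC.
rewrite prednK ?(ltnW r2) // => leCN.
by rewrite -(transversal_count_add_nontransversals F r) -addnBA // leq_addr.
Qed.
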